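(* Let $\mathtt{W}_1',\mathtt{W}_2'\in\mathcal{U}^\ast$ be words, $j_1,j_2\in\mathbb{Z}_{>0}$, and $n_1,n_2\in\mathbb{Z}_{\geq0}$, and put $\mathtt{W}_1=\mathtt{W}_1'u_{j_1}u_0^{n_1}$, $\mathtt{W}_2=\mathtt{W}_2'u_{j_2}u_0^{n_2}$. Then \begin{align*} \mathtt{W}_1\ast\mathtt{W}_2 =& \sum_{\substack{0\le k\le j\le n_2\\ 0\le\varepsilon\le\min\{1,n_2-j\}}}\binom{n_1+k}{n_1}\binom{n_1}{j-k}\left(\mathtt{W}_1'\ast\mathtt{W}_2'u_{j_2}u_0^{n_2-j-\varepsilon}\right)u_{j_1}u_0^{n_1+k}\\ &+\sum_{\substack{0\le k\le j\le n_1\\ 0\le\varepsilon\le\min\{1,n_1-j\}}}\binom{n_2+k}{n_2}\binom{n_2}{j-k}\left(\mathtt{W}_1'u_{j_1}u_0^{n_1-j-\varepsilon}\ast\mathtt{W}_2'\right)u_{j_2}u_0^{n_2+k}\\ &+\sum_{k=0}^{n_2}\binom{n_1+k}{n_1}\binom{n_1}{n_2-k}(\mathtt{W}_1'\ast\mathtt{W}_2')u_{j_1+j_2}u_0^{n_1+k}. \end{align*}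
   Context: Let $\mathcal{U}=\{u_j\mid j\in\mathbb{Z}_{\geq0}\}$ be an alphabet; $\mathcal{U}^\ast$ is the set of words (finite concatenations of letters, including the empty word $\mathbf{1}$), and $\mathbb{Q}\langle\mathcal{U}\rangle$ is the $\mathbb{Q}$-vector space with basis $\mathcal{U}^\ast$, with concatenation extended bilinearly; $u_0^n$ denotes the word consisting of $n$ copies of $u_0$. The stuffle product $\ast$ on $\mathbb{Q}\langle\mathcal{U}\rangle$ is the $\mathbb{Q}$-bilinear product with $\mathbf{1}\ast\mathtt{W}=\mathtt{W}\ast\mathbf{1}=\mathtt{W}$ and, for $j_1,j_2\in\mathbb{Z}_{\ge0}$ and words $\mathtt{W}_1,\mathtt{W}_2$, $u_{j_1}\mathtt{W}_1\ast u_{j_2}\mathtt{W}_2 = u_{j_1}(\mathtt{W}_1\ast u_{j_2}\mathtt{W}_2)+u_{j_2}(u_{j_1}\mathtt{W}_1\ast\mathtt{W}_2)+u_{j_1+j_2}(\mathtt{W}_1\ast\mathtt{W}_2)$. Binomial coefficients $\binom{a}{b}$ with $b<0$ or $b>a$ are $0$. *)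

From mathcomp Require Import all_boot all_order all_algebra.
Set Implicit Arguments. Unset Strict Implicit. Unset Printing Implicit Defensive.
Import GRing.Theory.
Local Open Scope ring_scope.

(* Letters u_j are encoded by their index j : nat; a word is a seq nat
   (the empty word 1 is [::]).  An element of Q<U> is represented by a
   finite formal sum: a list of (coefficient, word) pairs.  Two such lists
   denote the same element of Q<U> iff they have the same coefficient
   function [qcoef]. *)
Definition word := seq nat.
Definition qpoly := seq (rat * word).

Definition qcoef (p : qpoly) (w : word) : rat :=
  \sum_(x <- p | x.2 == w) x.1.

Definition qeq (p q : qpoly) : Prop := forall w, qcoef p w = qcoef q w.

Definition qscale (c : rat) (p : qpoly) : qpoly := [seq (c * x.1, x.2) | x <- p].
Definition qprepend (a : nat) (p : qpoly) : qpoly := [seq (x.1, a :: x.2) | x <- p].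
Definition qappend (p : qpoly) (w : word) : qpoly := [seq (x.1, x.2 ++ w) | x <- p].

Fixpoint stuffle (a b : word) {struct a} : qpoly :=
  match a with
  | [::] => [:: (1, b)]
  | x :: a' =>
      let fix aux (b : word) : qpoly :=
        match b with
        | [::] => [:: (1, a)]
        | y :: b' => qprepend x (stuffle a' b) ++ qprepend y (aux b')
                     ++ qprepend (x + y) (stuffle a' b')
        end in aux b
  end.

Definition qstuffle (p q : qpoly) : qpoly :=
  flatten [seq qscale (x.1 * y.1) (stuffle x.2 y.2) | x <- p, y <- q].

Definition u0pow (n : nat) : word := nseq n 0%N.

From Pilot Require Import Defs.
From mathcomp Require Import all_boot all_order all_algebra.
From mathcomp Require Import zify ring.
Set Implicit Arguments. Unset Strict Implicit. Unset Printing Implicit Defensive.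
Import GRing.Theory.
Local Open Scope ring_scope.

(* The stuffle product, defined by recursion on first letters, obeys the same
   recursion on last letters.  Let S(a, b) be the stuffle product of W1' u_j1 u_0^a
   and W2' u_j2 u_0^b, and T right multiplication by u_0.  Peeling off the last
   letters gives S(a+1, b+1) = T (S(a, b+1) + S(a+1, b) + S(a, b)), while on the
   edges a = 0 or b = 0 the letter u_j1 or u_j2 is reached and the three families
   of the statement enter.  This Delannoy-type recursion is solved by summing T^n
   over the lattice paths with steps (1,0), (0,1), (1,1) of length n.
   Everything is computed on coefficient functions word -> rat, on which right
   multiplication by a letter u_c is the linear operator [coef_rmul c]. *)

Lemma stuffle_cons x a y b :
  stuffle (x :: a) (y :: b) = qprepend x (stuffle a (y :: b))
    ++ qprepend y (stuffle (x :: a) b) ++ qprepend (x + y)%N (stuffle a b).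
Proof. by []. Qed.

Lemma stuffle0s b : stuffle [::] b = [:: (1, b)].
Proof. by []. Qed.

Lemma stuffles0 a : stuffle a [::] = [:: (1, a)].
Proof. by case: a. Qed.

Lemma qappend_cat p q w : qappend (p ++ q) w = qappend p w ++ qappend q w.
Proof. exact: map_cat. Qed.

Lemma qprepend_cat c p q : qprepend c (p ++ q) = qprepend c p ++ qprepend c q.
Proof. exact: map_cat. Qed.

Lemma qappend_prepend c p w : qappend (qprepend c p) w = qprepend c (qappend p w).
Proof. by rewrite /qappend /qprepend -!map_comp. Qed.

Lemma qappend1 w (z : rat * word) : qappend [:: z] w = [:: (z.1, z.2 ++ w)].
Proof. by []. Qed.

Lemma qprepend1 c (z : rat * word) : qprepend c [:: z] = [:: (z.1, c :: z.2)].
Proof. by []. Qed.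

Lemma perm_qprepend c p q : perm_eq p q -> perm_eq (qprepend c p) (qprepend c q).
Proof. exact: perm_map. Qed.

Lemma perm_stuffle_rcons x y a b :
  perm_eq (stuffle (rcons a x) (rcons b y))
    (qappend (stuffle a (rcons b y)) [:: x] ++ qappend (stuffle (rcons a x) b) [:: y]
     ++ qappend (stuffle a b) [:: (x + y)%N]).
Proof.
have rcons_nil (z : nat) : rcons [::] z = [:: z] by [].
elim: a b => [|p a IHa] b; elim: b => [|q b IHb].
- by apply/permP => P /=; lia.
- rewrite rcons_nil rcons_cons !stuffle_cons !stuffle0s in IHb *.
  apply/permP => P; rewrite !count_cat (permP (perm_qprepend _ IHb)).
  rewrite !qprepend_cat !qappend_cat !qappend_prepend !count_cat !qappend1 !qprepend1.
  by rewrite /= -!cats1 /=; lia.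
- have := IHa [::]; rewrite rcons_nil !stuffles0 => IH.
  rewrite rcons_cons !stuffle_cons !stuffles0.
  apply/permP => P; rewrite !count_cat (permP (perm_qprepend _ IH)).
  rewrite !qprepend_cat !qappend_cat !qappend_prepend !count_cat !qappend1 !qprepend1.
  by rewrite /= -!cats1 /=; lia.
- have := IHa (q :: b); rewrite rcons_cons => IHqb.
  rewrite rcons_cons in IHb; rewrite !rcons_cons !stuffle_cons.
  apply/permP => P; rewrite !count_cat (permP (perm_qprepend _ IHqb)).
  rewrite (permP (perm_qprepend _ IHb)) (permP (perm_qprepend _ (IHa b))).
  by rewrite !qprepend_cat !qappend_cat !qappend_prepend !count_cat; lia.
Qed.

Definition coef_rmul (c : nat) (f : word -> rat) (v : word) : rat :=
  if v is x :: s then (if last x s == c then f (belast x s) else 0) else 0.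

Lemma eq_coef_rmul c f g : f =1 g -> coef_rmul c f =1 coef_rmul c g.
Proof. by move=> fg [|x s] //=; rewrite fg. Qed.

Lemma coef_rmulD c f g v :
  coef_rmul c (fun w => f w + g w) v = coef_rmul c f v + coef_rmul c g v.
Proof. by case: v => [|x s] /=; [rewrite addr0 | case: ifP; rewrite ?addr0]. Qed.

Lemma coef_rmulZ c k f v : coef_rmul c (fun w => k * f w) v = k * coef_rmul c f v.
Proof. by case: v => [|x s] /=; [rewrite mulr0 | case: ifP; rewrite ?mulr0]. Qed.

Lemma coef_rmul_sum c n (F : 'I_n -> word -> rat) v :
  coef_rmul c (fun w => \sum_(i < n) F i w) v = \sum_(i < n) coef_rmul c (F i) v.
Proof. by case: v => [|x s] /=; [rewrite big1 | case: ifP => //; rewrite big1]. Qed.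

Lemma iter_coef_rmulD c m f g v :
  iter m (coef_rmul c) (fun w => f w + g w) v
  = iter m (coef_rmul c) f v + iter m (coef_rmul c) g v.
Proof.
elim: m v => [|m IHm] v //=.
by rewrite (eq_coef_rmul _ IHm) coef_rmulD.
Qed.

Lemma qcoef_cat p q w : qcoef (p ++ q) w = qcoef p w + qcoef q w.
Proof. by rewrite /qcoef big_cat. Qed.

Lemma qcoef_scale c p w : qcoef (qscale c p) w = c * qcoef p w.
Proof. by rewrite /qcoef /qscale big_map mulr_sumr. Qed.

Lemma qcoef_perm p q : perm_eq p q -> qcoef p =1 qcoef q.
Proof. by move=> pq w; rewrite /qcoef (perm_big _ pq). Qed.

Lemma qcoef_flatten_map (T : Type) (F : T -> Defs.qpoly) s w :
  qcoef (flatten [seq F i | i <- s]) w = \sum_(i <- s) qcoef (F i) w.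
Proof.
elim: s => [|x s IHs] /=; first by rewrite /qcoef !big_nil.
by rewrite qcoef_cat IHs big_cons.
Qed.

Lemma big_iota_ord n (F : nat -> rat) : \sum_(j <- iota 0 n) F j = \sum_(j < n) F j.
Proof. by rewrite -(big_mkord xpredT) /index_iota subn0. Qed.

Lemma qcoef_append1 p c : qcoef (qappend p [:: c]) =1 coef_rmul c (qcoef p).
Proof.
move=> [|y s]; rewrite /qcoef /qappend big_map /=.
  by rewrite big_pred0 // => -[r [|? ?]].
have catc w : (w ++ [:: c] == y :: s) = (w == belast y s) && (last y s == c).
  by rewrite cats1 (lastI y s) eqseq_rcons (eq_sym c).
under eq_bigl do rewrite catc.
case: ifP => _; first by under eq_bigl do rewrite andbT.
by rewrite big_pred0 // => z; rewrite andbF.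
Qed.

Lemma u0powSr n : u0pow n.+1 = rcons (u0pow n) 0%N.
Proof. by elim: n => //= n <-. Qed.

Lemma cat_u0powSr w j n : w ++ j :: u0pow n.+1 = rcons (w ++ j :: u0pow n) 0%N.
Proof. by rewrite u0powSr -rcons_cons rcons_cat. Qed.

Lemma qcoef_append_u0pow p j m :
  qcoef (qappend p (j :: u0pow m)) =1 iter m (coef_rmul 0) (qcoef (qappend p [:: j])).
Proof.
elim: m => [|m IHm] v //=.
have -> : qappend p (j :: u0pow m.+1) = qappend (qappend p (j :: u0pow m)) [:: 0%N].
  by rewrite /qappend -map_comp; apply: eq_map => z /=; rewrite cat_u0powSr cats1.
by rewrite qcoef_append1; apply: eq_coef_rmul.
Qed.

(* The number of lattice paths from (0,0) to (a,r) with steps (1,0), (0,1), (1,1)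
   that use a + k steps, r - k of them diagonal. *)
Definition delannoy_coef (a r k : nat) : nat :=
  (if k <= r then 'C(a + k, a) * 'C(a, r - k) else 0)%N.

Lemma delannoy_coefE a r (k : 'I_r.+1) :
  delannoy_coef a r k = ('C(a + k, a) * 'C(a, r - k))%N.
Proof. by rewrite /delannoy_coef -ltnS ltn_ord. Qed.

Lemma delannoy_coef0 a r :
  delannoy_coef a.+1 r.+1 0 = (delannoy_coef a r.+1 0 + delannoy_coef a r 0)%N.
Proof. by rewrite /delannoy_coef /= !addn0 !subn0 !binn !mul1n binS. Qed.

Lemma delannoy_coefS a r k :
  delannoy_coef a.+1 r.+1 k.+1
  = (delannoy_coef a r.+1 k.+1 + delannoy_coef a.+1 r k + delannoy_coef a r k.+1)%N.
Proof.
rewrite /delannoy_coef !ltnS !subSS.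
have [kr|rk] := leqP k r; last by rewrite ltnNge (ltnW rk).
rewrite addSn -addSnnS binS.
have [kr'|rk] := ltnP k r; first by rewrite -[(r - k)%N](subnSK kr') binS; ring.
have -> : r = k by apply/eqP; rewrite eqn_leq kr rk.
by rewrite subnn !bin0; ring.
Qed.

Definition delannoy (a r : nat) (f : word -> rat) (v : word) : rat :=
  \sum_(k < r.+1) (delannoy_coef a r k)%:R * iter (a + k) (coef_rmul 0) f v.

Lemma delannoy0r r f v : delannoy 0 r f v = iter r (coef_rmul 0) f v.
Proof.
rewrite /delannoy big_ord_recr /= big1 ?add0r => [|i _].
  by rewrite /delannoy_coef leqnn subnn bin0 bin0n mul1r.
by rewrite /delannoy_coef ltnW // bin0n subn_eq0 leqNgt ltn_ord muln0 mul0r.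
Qed.

Lemma delannoyr0 a f v : delannoy a 0 f v = iter a (coef_rmul 0) f v.
Proof. by rewrite /delannoy big_ord1 /delannoy_coef addn0 binn bin0 mul1r. Qed.

Lemma delannoySS a r f v :
  delannoy a.+1 r.+1 f v = coef_rmul 0 (delannoy a r.+1 f) v
    + coef_rmul 0 (delannoy a.+1 r f) v + coef_rmul 0 (delannoy a r f) v.
Proof.
pose t n := iter n (coef_rmul 0) f v.
have rmul_delannoy b s : coef_rmul 0 (delannoy b s f) v
    = \sum_(k < s.+1) (delannoy_coef b s k)%:R * t (b + k).+1.
  by rewrite /delannoy coef_rmul_sum; apply: eq_bigr => k _; rewrite coef_rmulZ.
have -> : coef_rmul 0 (delannoy a r f) v
    = \sum_(k < r.+2) (delannoy_coef a r k)%:R * t (a + k).+1.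
  by rewrite rmul_delannoy [RHS]big_ord_recr /= /delannoy_coef ltnn mul0r addr0.
rewrite !rmul_delannoy addrAC -big_split /delannoy.
rewrite big_ord_recl /= [X in _ = X + _]big_ord_recl.
rewrite -!addrA -big_split addrA; congr (_ + _).
  by rewrite delannoy_coef0 natrD mulrDl.
apply: eq_bigr => i _; rewrite delannoy_coefS !natrD !mulrDl addrAC.
by rewrite -[bump 0 i]/(i.+1) addSnnS.
Qed.

Lemma delannoy0S r f v : delannoy 0 r.+1 f v = coef_rmul 0 (delannoy 0 r f) v.
Proof. by rewrite delannoy0r; apply: eq_coef_rmul => w; rewrite delannoy0r. Qed.

Lemma delannoyS0 a f v : delannoy a.+1 0 f v = coef_rmul 0 (delannoy a 0 f) v.
Proof. by rewrite delannoyr0; apply: eq_coef_rmul => w; rewrite delannoyr0. Qed.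

Definition delannoy_conv (a b : nat) (F : nat -> word -> rat) (v : word) : rat :=
  \sum_(j < b.+1) delannoy a j (F (b - j)%N) v.

Lemma delannoy_conv00 F v : delannoy_conv 0 0 F v = F 0%N v.
Proof. by rewrite /delannoy_conv big_ord1 delannoy0r. Qed.

Lemma delannoy_conv0S b F v :
  delannoy_conv 0 b.+1 F v = coef_rmul 0 (delannoy_conv 0 b F) v + F b.+1 v.
Proof.
rewrite /delannoy_conv coef_rmul_sum big_ord_recl delannoy0r subn0 addrC.
by congr (_ + _); apply: eq_bigr => j _; rewrite subSS delannoy0S.
Qed.

Lemma delannoy_convS0 a F v :
  delannoy_conv a.+1 0 F v = coef_rmul 0 (delannoy_conv a 0 F) v.
Proof. by rewrite /delannoy_conv coef_rmul_sum !big_ord1 delannoyS0. Qed.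

Lemma delannoy_convSS a b F v :
  delannoy_conv a.+1 b.+1 F v = coef_rmul 0 (delannoy_conv a b.+1 F) v
    + coef_rmul 0 (delannoy_conv a.+1 b F) v + coef_rmul 0 (delannoy_conv a b F) v.
Proof.
rewrite /delannoy_conv !coef_rmul_sum big_ord_recl [in RHS]big_ord_recl.
rewrite !subn0 delannoyS0.
under eq_bigr do rewrite subSS delannoySS.
rewrite !big_split /=; ring.
Qed.

(* The sum over 0 <= e <= minn 1 s in the statement. *)
Definition sum_prev (F : nat -> word -> rat) (s : nat) : word -> rat :=
  if s is s'.+1 then fun v => F s v + F s' v else F 0%N.

Lemma sum_prevS F s v : sum_prev F s.+1 v = F s.+1 v + F s v.
Proof. by []. Qed.

Lemma qcoef_stuffle_rcons x y a b v :
  qcoef (stuffle (rcons a x) (rcons b y)) v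
  = coef_rmul x (qcoef (stuffle a (rcons b y))) v
    + coef_rmul y (qcoef (stuffle (rcons a x) b)) v
    + coef_rmul (x + y)%N (qcoef (stuffle a b)) v.
Proof.
by rewrite (qcoef_perm (perm_stuffle_rcons x y a b)) !qcoef_cat !qcoef_append1 addrA.
Qed.

Section StuffleClosedForm.

Variables (W1 W2 : word) (j1 j2 : nat).

Definition stuffle_coef (a b : nat) : word -> rat :=
  qcoef (stuffle (W1 ++ j1 :: u0pow a) (W2 ++ j2 :: u0pow b)).

Definition coef_lastl (s : nat) : word -> rat :=
  qcoef (qappend (stuffle W1 (W2 ++ j2 :: u0pow s)) [:: j1]).

Definition coef_lastr (s : nat) : word -> rat :=
  qcoef (qappend (stuffle (W1 ++ j1 :: u0pow s) W2) [:: j2]).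

Definition coef_lastlr : word -> rat := qcoef (qappend (stuffle W1 W2) [:: (j1 + j2)%N]).

Lemma stuffle_coefSS a b v :
  stuffle_coef a.+1 b.+1 v = coef_rmul 0 (stuffle_coef a b.+1) v
    + coef_rmul 0 (stuffle_coef a.+1 b) v + coef_rmul 0 (stuffle_coef a b) v.
Proof. by rewrite /stuffle_coef !cat_u0powSr qcoef_stuffle_rcons. Qed.

Lemma stuffle_coef0S b v :
  stuffle_coef 0 b.+1 v
  = coef_lastl b.+1 v + coef_rmul 0 (stuffle_coef 0 b) v + coef_lastl b v.
Proof.
rewrite /stuffle_coef /coef_lastl !qcoef_append1 cats1 cat_u0powSr.
by rewrite qcoef_stuffle_rcons -cat_u0powSr addn0.
Qed.

Lemma stuffle_coefS0 a v :
  stuffle_coef a.+1 0 v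
  = coef_rmul 0 (stuffle_coef a 0) v + coef_lastr a.+1 v + coef_lastr a v.
Proof.
rewrite /stuffle_coef /coef_lastr !qcoef_append1 [W2 ++ _]cats1 cat_u0powSr.
by rewrite qcoef_stuffle_rcons -cat_u0powSr add0n.
Qed.

Lemma stuffle_coef00 v :
  stuffle_coef 0 0 v = coef_lastl 0 v + coef_lastr 0 v + coef_lastlr v.
Proof.
rewrite /stuffle_coef /coef_lastl /coef_lastr /coef_lastlr !qcoef_append1.
by rewrite !cats1 qcoef_stuffle_rcons.
Qed.

Lemma stuffle_coefE a b v :
  stuffle_coef a b v
  = delannoy_conv a b (sum_prev coef_lastl) v + delannoy_conv b a (sum_prev coef_lastr) v
    + delannoy a b coef_lastlr v.
Proof.
elim: a b v => [|a IHa] b v; elim: b v => [|b IHb] v.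
- by rewrite stuffle_coef00 !delannoy_conv00 delannoyr0.
- rewrite stuffle_coef0S (eq_coef_rmul _ IHb) !coef_rmulD.
  by rewrite delannoy_conv0S delannoy_convS0 delannoy0S sum_prevS; ring.
- rewrite stuffle_coefS0 (eq_coef_rmul _ (IHa 0%N)) !coef_rmulD.
  by rewrite delannoy_convS0 delannoy_conv0S delannoyS0 sum_prevS; ring.
- rewrite stuffle_coefSS (eq_coef_rmul _ (IHa b.+1)) (eq_coef_rmul _ IHb).
  by rewrite (eq_coef_rmul _ (IHa b)) !coef_rmulD !delannoy_convSS delannoySS; ring.
Qed.

End StuffleClosedForm.

Lemma qcoef_delannoy P l a r v :
  qcoef (flatten [seq qscale ('C(a + k, a) * 'C(a, r - k))%:R
                    (qappend P (l :: u0pow (a + k))) | k <- iota 0 r.+1]) v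
  = delannoy a r (qcoef (qappend P [:: l])) v.
Proof.
rewrite qcoef_flatten_map big_iota_ord; apply: eq_bigr => k _.
by rewrite qcoef_scale qcoef_append_u0pow delannoy_coefE.
Qed.

Lemma qcoef_delannoy_conv (P : nat -> Defs.qpoly) l a b v :
  qcoef (flatten [seq flatten [seq flatten [seq
      qscale ('C(a + k, a) * 'C(a, j - k))%:R
        (qappend (P (b - j - e)%N) (l :: u0pow (a + k)))
      | e <- iota 0 (minn 1 (b - j)).+1] | k <- iota 0 j.+1] | j <- iota 0 b.+1]) v
  = delannoy_conv a b (sum_prev (fun s => qcoef (qappend (P s) [:: l]))) v.
Proof.
rewrite qcoef_flatten_map big_iota_ord; apply: eq_bigr => j _.
rewrite qcoef_flatten_map big_iota_ord; apply: eq_bigr => k _.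
rewrite qcoef_flatten_map delannoy_coefE.
case: (b - j)%N => [|s] /=; first by rewrite big_seq1 qcoef_scale qcoef_append_u0pow.
rewrite minnSS min0n /= big_cons big_seq1 !qcoef_scale !qcoef_append_u0pow.
by rewrite subn0 subSS subn0 iter_coef_rmulD mulrDr.
Qed.

Theorem lemma2p2 (W1' W2' : word) (j1 j2 n1 n2 : nat) :
  (0 < j1)%N -> (0 < j2)%N ->
  qeq (stuffle (W1' ++ j1 :: u0pow n1) (W2' ++ j2 :: u0pow n2))
    (flatten [seq flatten [seq flatten [seq
        qscale ('C(n1 + k, n1) * 'C(n1, j - k))%:R
          (qappend (stuffle W1' (W2' ++ j2 :: u0pow (n2 - j - e)))
                   (j1 :: u0pow (n1 + k)))
        | e <- iota 0 (minn 1 (n2 - j)).+1]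
        | k <- iota 0 j.+1]
        | j <- iota 0 n2.+1]
     ++ flatten [seq flatten [seq flatten [seq
        qscale ('C(n2 + k, n2) * 'C(n2, j - k))%:R
          (qappend (stuffle (W1' ++ j1 :: u0pow (n1 - j - e)) W2')
                   (j2 :: u0pow (n2 + k)))
        | e <- iota 0 (minn 1 (n1 - j)).+1]
        | k <- iota 0 j.+1]
        | j <- iota 0 n1.+1]
     ++ flatten [seq
        qscale ('C(n1 + k, n1) * 'C(n1, n2 - k))%:R
          (qappend (stuffle W1' W2') ((j1 + j2)%N :: u0pow (n1 + k)))
        | k <- iota 0 n2.+1]).
Proof.
move=> _ _ w.
rewrite -[LHS]/(stuffle_coef W1' W2' j1 j2 n1 n2 w) stuffle_coefE.
rewrite [RHS]qcoef_cat [X in _ = _ + X]qcoef_cat addrA.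
congr (_ + _ + _); apply/esym.
- exact: (qcoef_delannoy_conv (fun s => stuffle W1' (W2' ++ j2 :: u0pow s))).
- exact: (qcoef_delannoy_conv (fun s => stuffle (W1' ++ j1 :: u0pow s) W2')).
- exact: qcoef_delannoy.
Qed.
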